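(* Let $n,N,L\ge 1$ be integers, $0<p<1$ and $0<\epsilon_2<1$. Define $$N_{\mathsf{Th}}=\frac{\log_2\left(\left(\frac{\epsilon_2+2^{n}}{2^{n}}\right)^{1/n}-1\right)}{\log_2(p)}.$$ If $N\ge N_{\mathsf{Th}}$, then in the random model described in the context, with probability at least $1-\epsilon_2$ the set $\mathbb{L}_{\mathcal{P}^*,\mathcal{Y}}$ of labellings of the true partitioning equals $\{\mathcal{L}^*\}$.
   Context: Model: Let $M=2^n$ and $C=\{0,1\}^n=\{\mathbf{x}_1,\dots,\mathbf{x}_M\}$ (addresses). Data parts $\mathbf{d}_1,\dots,\mathbf{d}_M$ are independent and uniform on $\{0,1\}^L$; strand $i$ is $(\mathbf{x}_i,\mathbf{d}_i)$. Each strand is transmitted $N$ times through $\mathsf{BEC}(p)$ (each symbol independently replaced by $*$ with probability $p$, independently across transmissions and strands); $\mathcal{S}_N((\mathbf{x}_i,\mathbf{d}_i))$ is the multiset of the $N$ reads of strand $i$ and $\mathcal{Y}$ the multiset of all $MN$ reads. An address $\mathbf{x}$ is compatible with a read $(\mathbf{y},\mathbf{d}')$ if $\mathbf{x}$ and $\mathbf{y}$ coincide at all non-erased positions of $\mathbf{y}$. The true partitioning is $\mathcal{P}^*=\{P_1,\dots,P_M\}$ with $P_i=\mathcal{S}_N((\mathbf{x}_i,\mathbf{d}_i))$. A labelling of $\mathcal{P}^*$ is a vector $\mathcal{L}$ of $M$ distinct addresses from $C$ such that, for each $i\in[M]$, $\mathcal{L}[i]$ is compatible with every read in $P_i$; $\mathbb{L}_{\mathcal{P}^*,\mathcal{Y}}$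 is the set of all such labellings, and the true labelling $\mathcal{L}^*$ has $\mathcal{L}^*[i]=\mathbf{x}_i$ for all $i$. *)

From HB Require Import structures.
From mathcomp Require Import all_boot all_order all_algebra.
From mathcomp Require Import reals exp.
Set Implicit Arguments. Unset Strict Implicit. Unset Printing Implicit Defensive.
Import Order.TTheory GRing.Theory Num.Theory.
Local Open Scope ring_scope.

Definition addr (n : nat) := {ffun 'I_n -> bool}.
(* M = |C| = 2^n ; strands are indexed by 'I_M *)
Definition Mof (n : nat) := #|addr n|.
Definition xaddr (n : nat) (i : 'I_(Mof n)) : addr n := enum_val i.

(* an outcome of the random experiment:
   data parts d_i, and erasure patterns: for strand i and transmission j,
   which symbols (address positions inl k, data positions inr k) are erased. *)
Definition outcome (n N L : nat) :=
  ({ffun 'I_(Mof n) -> {ffun 'I_L -> bool}} *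
   {ffun ('I_(Mof n) * 'I_N) -> {ffun ('I_n + 'I_L) -> bool}})%type.

(* a read: word over {0,1,*}, None = erasure symbol * *)
Definition read (n L : nat) :=
  ({ffun 'I_n -> option bool} * {ffun 'I_L -> option bool})%type.

Definition the_read n N L (w : outcome n N L) (i : 'I_(Mof n)) (j : 'I_N)
  : read n L :=
  ([ffun k => if w.2 (i, j) (inl k) then None else Some (xaddr i k)],
   [ffun k => if w.2 (i, j) (inr k) then None else Some (w.1 i k)]).

Definition compatible n L (x : addr n) (r : read n L) : bool :=
  [forall k, if r.1 k is Some b then x k == b else true].

(* Lab is a labelling of the true partitioning P* (P_i = reads of strand i) *)
Definition is_labelling n N L (w : outcome n N L)
  (Lab : {ffun 'I_(Mof n) -> addr n}) : bool :=
  injectiveb Lab &&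
  [forall i, forall j : 'I_N, compatible (Lab i) (the_read w i j)].

Definition true_labelling n : {ffun 'I_(Mof n) -> addr n} := [ffun i => xaddr i].

Definition unique_labelling n N L (w : outcome n N L) : bool :=
  [forall Lab, is_labelling w Lab == (Lab == true_labelling n)].

(* probability mass of an outcome: data uniform and independent,
   each symbol of each transmission erased independently with prob. p *)
Definition weight {R : realType} (p : R) n N L (w : outcome n N L) : R :=
  (2%:R ^- (L * Mof n)) *
  \prod_(ij : 'I_(Mof n) * 'I_N) \prod_(k : 'I_n + 'I_L)
     (if w.2 ij k then p else 1 - p).

Definition Prob {R : realType} (p : R) n N L (E : pred (outcome n N L)) : R :=
  \sum_(w | E w) weight p w.

Definition log2 {R : realType} (x : R) : R := ln x / ln 2.

Definition N_Th {R : realType} (n : nat) (p eps2 : R) : R :=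
  log2 (powR ((eps2 + 2%:R ^+ n) / 2%:R ^+ n) (n%:R^-1) - 1) / log2 p.

From mathcomp Require Import all_boot all_order all_algebra.
From mathcomp Require Import reals exp.
From mathcomp Require Import lra.
Set Implicit Arguments. Unset Strict Implicit. Unset Printing Implicit Defensive.
Import Order.TTheory GRing.Theory Num.Theory.
Local Open Scope ring_scope.

(* Every read of strand i is compatible with its label, so a labelling must
   agree with x_i at each address position k that survives in some read of
   strand i; once every (i, k) survives somewhere, the true labelling is the
   only one.  The complementary event is covered by the M n events "position k
   of strand i is erased in all N reads", each of probability p ^ N.  The
   threshold N_Th is exactly what makes (1 + p ^ N) ^ n <= 1 + eps2 / 2 ^ n,
   and Bernoulli's inequality turns this into 2 ^ n n p ^ N <= eps2. *)

Lemma union_bound (R : numDomainType) (A T : finType) (E : A -> pred T) (f : T -> R) :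
  (forall x, 0 <= f x) ->
  \sum_(x | [exists a, E a x]) f x <= \sum_a \sum_(x | E a x) f x.
Proof.
move=> f_ge0; under [X in _ <= X]eq_bigr do rewrite big_mkcond /=.
rewrite exchange_big /= big_mkcond /=; apply: ler_sum => x _.
have sum_ge0 : 0 <= \sum_a (if E a x then f x else 0).
  by apply: sumr_ge0 => a _; case: ifP.
case: existsP => [[a Eax]|_] //.
rewrite (bigD1 a) //= Eax lerDl; apply: sumr_ge0 => b _; by case: ifP.
Qed.

Section ErasureMass.
Variables (R : realType) (p : R).

(* [weight p w] is convertible to [2 ^- (L * M) * erasure_mass p w.2]. *)
Definition erasure_mass {I K : finType} (e : {ffun I -> {ffun K -> bool}}) : R :=
  \prod_i \prod_k (if e i k then p else 1 - p).

Lemma erasure_mass_ge0 (I K : finType) (e : {ffun I -> {ffun K -> bool}}) :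
  0 <= p <= 1 -> 0 <= erasure_mass e.
Proof.
move=> /andP[p_ge0 p_le1]; apply: prodr_ge0 => i _; apply: prodr_ge0 => k _.
by case: ifP; rewrite ?subr_ge0.
Qed.

Lemma sum_ffun2_prod (I K : finType) (G : I -> K -> bool -> R) :
  \sum_(e : {ffun I -> {ffun K -> bool}}) \prod_i \prod_k G i k (e i k)
  = \prod_i \prod_k (G i k true + G i k false).
Proof.
rewrite -(bigA_distr_bigA (fun i (g : {ffun K -> bool}) => \prod_k G i k (g k))).
apply: eq_bigr => i _; rewrite -(bigA_distr_bigA (G i)).
by apply: eq_bigr => k _; rewrite big_bool.
Qed.

Lemma natr_forall (I : finType) (P : pred I) :
  [forall i, P i]%:R = \prod_i (P i)%:R :> R.
Proof.
have -> : [forall i, P i] = \big[andb/true]_i P i by rewrite big_andE.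
by rewrite (big_morph (fun b : bool => b%:R : R) (id1 := 1) (op1 := *%R)) // => -[] b;
  rewrite ?mul1r ?mul0r.
Qed.

Lemma erasure_mass_cylinder (I K : finType) (S : I -> K -> bool) :
  \sum_(e : {ffun I -> {ffun K -> bool}} | [forall i, forall k, S i k ==> e i k])
    erasure_mass e
  = \prod_i \prod_k (if S i k then p else 1).
Proof.
(* The indicator of the cylinder is a product over coordinates, so the sum
   factorises. *)
pose G i k (b : bool) := (if b then p else 1 - p) * (S i k ==> b)%:R.
have -> : \sum_(e : {ffun I -> {ffun K -> bool}} | [forall i, forall k, S i k ==> e i k])
            erasure_mass e
          = \sum_(e : {ffun I -> {ffun K -> bool}}) \prod_i \prod_k G i k (e i k).
  rewrite big_mkcond; apply: eq_bigr => e _.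
  have -> : forall b : bool, (if b then erasure_mass e else 0) = erasure_mass e * b%:R.
    by case; rewrite ?mulr1 ?mulr0.
  rewrite natr_forall -big_split /=; apply: eq_bigr => i _.
  by rewrite natr_forall -big_split.
rewrite sum_ffun2_prod; apply: eq_bigr => i _; apply: eq_bigr => k _.
by rewrite /G; case: (S i k); rewrite /= ?mulr1 ?mulr0 ?addr0 // addrC subrK.
Qed.

Lemma erasure_mass_total (I K : finType) :
  \sum_(e : {ffun I -> {ffun K -> bool}}) erasure_mass e = 1.
Proof.
transitivity (\prod_(i : I) \prod_(k : K) (if false then p else 1)).
  rewrite -(erasure_mass_cylinder (fun _ _ => false)).
  by apply: eq_bigl => e; apply/esym/forallP => i; exact/forallP.
by rewrite big1 // => i _; rewrite big1.
Qed.

Lemma erasure_mass_all_erased (I J K : finType) (i0 : I) (k0 : K) :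
  \sum_(e : {ffun I * J -> {ffun K -> bool}} | [forall j, e (i0, j) k0]) erasure_mass e
  = p ^+ #|J|.
Proof.
pose S (ij : I * J) k := (ij.1 == i0) && (k == k0).
have -> : \sum_(e : {ffun I * J -> {ffun K -> bool}} | [forall j, e (i0, j) k0]) erasure_mass e
          = \sum_(e : {ffun I * J -> {ffun K -> bool}} | [forall ij, forall k, S ij k ==> e ij k])
              erasure_mass e.
  apply: eq_bigl => e; apply/forallP/forallP => [all_j [i j]|all_ijk j].
    by apply/forallP => k; apply/implyP => /andP[/eqP /= -> /eqP ->].
  by have /forallP/(_ k0)/implyP := all_ijk (i0, j); apply; rewrite /S !eqxx.
rewrite erasure_mass_cylinder.
rewrite -(pair_bigA _ (fun i j => \prod_k if S (i, j) k then p else 1)).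
rewrite (bigD1 i0) //= [X in _ * X]big1 ?mulr1; last first.
  move=> i /negPf i_neq; apply: big1 => j _; apply: big1 => k _.
  by rewrite /S /= i_neq.
rewrite -prodr_const; apply: eq_bigr => j _.
by rewrite (bigD1 k0) //= /S !eqxx big1 ?mulr1 // => k /negPf ->; rewrite andbF.
Qed.

End ErasureMass.

Section Model.
Variables (R : realType) (p : R) (n N L : nat).
Hypothesis p01 : 0 <= p <= 1.

Lemma weight_ge0 (w : outcome n N L) : 0 <= weight p w.
Proof. by rewrite mulr_ge0 ?invr_ge0 ?exprn_ge0 // (erasure_mass_ge0 _ p01). Qed.

Lemma le_Prob (E1 E2 : pred (outcome n N L)) :
  (forall w, E1 w -> E2 w) -> Prob p E1 <= Prob p E2.
Proof.
move=> E12; rewrite /Prob [leLHS]big_mkcond [leRHS]big_mkcond.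
apply: ler_sum => w _; case: ifP => [/E12 ->|_] //.
by case: ifP; rewrite ?weight_ge0.
Qed.

Lemma Prob_erasure_event
    (E : pred {ffun 'I_(Mof n) * 'I_N -> {ffun 'I_n + 'I_L -> bool}}) :
  Prob p (fun w : outcome n N L => E w.2) = \sum_(e | E e) erasure_mass p e.
Proof.
pose weight_of d e : R := @weight R p n N L (d, e).
have -> : Prob p (fun w : outcome n N L => E w.2)
          = \sum_(w : outcome n N L | predT w.1 && E w.2) weight_of w.1 w.2.
  by apply: eq_bigr => -[].
rewrite -pair_big; under eq_bigr do rewrite -mulr_sumr /=.
rewrite sumr_const -(mulr_natl _ #|_|) mulrA.
rewrite cardT -cardE card_ffun card_ffun card_bool !card_ord -expnM natrX /Mof.
by rewrite divff ?mul1r // expf_neq0 // pnatr_eq0.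
Qed.

End Model.

Definition addresses_recoverable {I J : finType} {n L : nat}
    (e : {ffun I * J -> {ffun 'I_n + 'I_L -> bool}}) :=
  [forall i, forall k : 'I_n, exists j, ~~ e (i, j) (inl k)].

Lemma addresses_unrecoverableE (I J : finType) n L
    (e : {ffun I * J -> {ffun 'I_n + 'I_L -> bool}}) :
  ~~ addresses_recoverable e = [exists ik : I * 'I_n, forall j, e (ik.1, j) (inl ik.2)].
Proof.
apply/idP/existsP => [/forallPn[i /forallPn[k /existsPn all_erased]]|].
  by exists (i, k); apply/forallP => j; rewrite -[e _ _]negbK all_erased.
case=> -[i k] /forallP /= all_erased; apply/forallPn; exists i; apply/forallPn.
by exists k; apply/existsPn => j; rewrite all_erased.
Qed.

Lemma unrecoverable_mass_le (R : realType) (p : R) (I J : finType) n L :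
  0 <= p <= 1 ->
  \sum_(e : {ffun I * J -> {ffun 'I_n + 'I_L -> bool}} | ~~ addresses_recoverable e)
    erasure_mass p e
  <= (#|I| * n)%:R * p ^+ #|J|.
Proof.
move=> p01; rewrite (eq_bigl _ _ (@addresses_unrecoverableE _ _ _ _)) /=.
pose all_erased (ik : I * 'I_n) (e : {ffun I * J -> {ffun 'I_n + 'I_L -> bool}}) :=
  [forall j, e (ik.1, j) (inl ik.2)].
apply: le_trans (union_bound all_erased (fun e => erasure_mass_ge0 e p01)) _.
under eq_bigr do rewrite erasure_mass_all_erased.
by rewrite sumr_const card_prod card_ord mulr_natl.
Qed.

Lemma card_addr n : Mof n = (2 ^ n)%N.
Proof. by rewrite /Mof card_ffun card_bool card_ord. Qed.

Lemma true_labelling_is_labelling n N L (w : outcome n N L) :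
  is_labelling w (true_labelling n).
Proof.
apply/andP; split.
  by apply/injectiveP => i j; rewrite !ffunE; exact: enum_val_inj.
apply/forallP => i; apply/forallP => j; apply/forallP => k.
by rewrite /= !ffunE; case: ifP.
Qed.

Lemma recoverable_unique_labelling n N L (w : outcome n N L) :
  addresses_recoverable w.2 -> unique_labelling w.
Proof.
move=> recov; apply/forallP => Lab; apply/eqP.
have [->|Lab_neq] := eqVneq Lab (true_labelling n).
  exact: true_labelling_is_labelling.
apply/negbTE/negP => /andP[_ /forallP compat]; case/eqP: Lab_neq.
apply/ffunP => i; apply/ffunP => k; rewrite ffunE.
have /existsP[j kept] := forallP (forallP recov i) k.
have /forallP/(_ k) := forallP (compat i) j.
by rewrite /= ffunE (negbTE kept) => /eqP.
Qed.

Lemma bernoulli_inequality (R : realDomainType) (x : R) (m : nat) :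
  0 <= x -> 1 + x *+ m <= (1 + x) ^+ m.
Proof.
move=> x_ge0; elim: m => [|m IHm]; first by rewrite expr0 mulr0n addr0.
have xm_ge0 : 0 <= x *+ m by rewrite mulrn_wge0.
have : (1 + x) * (1 + x *+ m) <= (1 + x) ^+ m.+1.
  by rewrite exprS ler_wpM2l // addr_ge0.
rewrite mulrS; nra.
Qed.

Lemma expr_le_of_log2_ratio (R : realType) (p y : R) (N : nat) :
  0 < p < 1 -> 0 < y -> log2 y / log2 p <= N%:R -> p ^+ N <= y.
Proof.
move=> /andP[p_gt0 p_lt1] y_gt0.
have ln2_gt0 : 0 < ln (2 : R) by rewrite ln_gt0 // ltr1n.
have lnp_lt0 : ln p < 0 by rewrite ln_lt0 // p_gt0 p_lt1.
rewrite /log2 invf_div mulrA divfK ?gt_eqF // ler_ndivrMr //.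
by rewrite mulr_natl -lnXn // ler_ln // posrE ?exprn_gt0.
Qed.

Lemma N_Th_union_bound (R : realType) (n N : nat) (p eps2 : R) :
  (0 < n)%N -> 0 < p < 1 -> 0 < eps2 -> N_Th n p eps2 <= N%:R ->
  (2 ^ n * n)%:R * p ^+ N <= eps2.
Proof.
move=> n_gt0 p01 eps2_gt0 N_ge.
set t : R := 2 ^+ n; set b := (eps2 + t) / t; set a := b `^ n%:R^-1.
have t_gt0 : 0 < t by rewrite exprn_gt0.
have b_gt1 : 1 < b by rewrite ltr_pdivlMr // mul1r ltrDr.
have b_ge0 : 0 <= b by rewrite ltW // (lt_trans ltr01).
have a_gt1 : 1 < a.
  have := @gt0_ltr_powR R n%:R^-1 _ 1 b; rewrite powR1 /a; apply => //.
  - by rewrite invr_gt0 ltr0n.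
  - by rewrite nnegrE ler01.
have pN_le : p ^+ N <= a - 1.
  by apply: expr_le_of_log2_ratio N_ge; rewrite // subr_gt0.
have an_eq : a ^+ n = b.
  rewrite -powR_mulrn ?(ltW (lt_trans ltr01 a_gt1)) // /a -powRrM.
  by rewrite mulVf ?powRr1 ?pnatr_eq0 -?lt0n // ltW // (lt_trans ltr01).
have pN_ge0 : 0 <= p ^+ N by rewrite exprn_ge0 // ltW //; case/andP: p01.
have : 1 + p ^+ N *+ n <= b.
  rewrite -an_eq; apply: le_trans (bernoulli_inequality n pN_ge0) _.
  by rewrite lerXn2r ?nnegrE ?addr_ge0 ?(ltW (lt_trans ltr01 a_gt1)) // addrC -lerBrDr.
rewrite /b mulrDl divff ?gt_eqF // addrC lerD2r.
by rewrite natrM natrX -mulrA mulr_natl -ler_pdivlMl // mulrC.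
Qed.

Theorem lemma4 (R : realType) (n N L : nat) (p eps2 : R) :
  (1 <= n)%N -> (1 <= N)%N -> (1 <= L)%N ->
  0 < p -> p < 1 -> 0 < eps2 -> eps2 < 1 ->
  N_Th n p eps2 <= N%:R ->
  1 - eps2 <= Prob p (fun w : outcome n N L => unique_labelling w).
Proof.
move=> n_gt0 _ _ p_gt0 p_lt1 eps2_gt0 _ N_ge.
have p_in01 : 0 < p < 1 by rewrite p_gt0 p_lt1.
have p01 : 0 <= p <= 1 by rewrite !ltW.
apply: le_trans (le_Prob p01 (@recoverable_unique_labelling n N L)).
rewrite Prob_erasure_event.
have := erasure_mass_total p ('I_(Mof n) * 'I_N)%type ('I_n + 'I_L)%type.
rewrite (bigID addresses_recoverable) /=.
have := unrecoverable_mass_le 'I_(Mof n) 'I_N n L p01.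
rewrite !card_ord card_addr.
have := N_Th_union_bound n_gt0 p_in01 eps2_gt0 N_ge.
lra.
Qed.
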